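(* Let $m>1$, $p\equiv1\pmod m$ an odd prime, and $r$ an integer whose class in $(\mathbb Z/p\mathbb Z)^\times$ has order $m$; let $s$ be an integer with $rs\equiv1\pmod p$. Let $L/F$ be a Galois extension of number fields with $\mathrm{Gal}(L/F)=\langle\sigma,\tau:\sigma^p=\tau^m=1,\ \tau^{-1}\sigma\tau=\sigma^r\rangle$, and let $k$ be the fixed field of $\langle\sigma\rangle$. Then the map $\theta:\mathrm{Am}\to (E_k\cap N_{L/k}L^\times)/N_{L/k}E_L$ satisfies $\theta(c^\tau)=\theta(c)^{s\tau}$ for all $c\in\mathrm{Am}$.
   Context: $\mathrm{Am}=\{c\in\mathrm{Cl}_p(L):c^\sigma=c\}$, where $\mathrm{Cl}_p(L)$ is the Sylow $p$-subgroup of the class group of $L$; $E_M$ is the unit group of $M$. For $c\in\mathrm{Am}$ choose an ideal $\mathfrak a\in c$, write $\mathfrak a^{\sigma-1}=(\alpha)$ with $\alpha\in L^\times$; then $\theta(c)=N_{L/k}(\alpha)\cdot N_{L/k}E_L$ (well defined). The group $(E_k\cap N_{L/k}L^\times)/N_{L/k}E_L$ has exponent $p$ and $\tau$ acts on it; $x^{s\tau}$ means $(x^s)^\tau$. *)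

From HB Require Import structures.
From mathcomp Require Import all_boot all_order all_algebra all_fingroup all_field.
Set Implicit Arguments. Unset Strict Implicit. Unset Printing Implicit Defensive.
Import GRing.Theory Num.Theory.
Local Open Scope ring_scope.

(* Number fields are modelled as subfields L of an ambient finite Galois
   extension M of Q (M : splittingFieldType rat); every number field embeds
   in such an M (e.g. its Galois closure). *)

Section NF.
Variable M : splittingFieldType rat.

Definition alg_int (x : M) : Prop :=
  exists q : {poly int}, q \is monic /\ root (map_poly (fun z : int => z%:~R) q) x.

Definition in_OK (E : {vspace M}) (x : M) : Prop := x \in E /\ alg_int x.

Definition in_units (E : {vspace M}) (x : M) : Prop :=
  x != 0 /\ in_OK E x /\ in_OK E x^-1.

Definition idl (E : {vspace M}) (gs : seq M) : M -> Prop :=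
  fun x => exists cs : seq M, size cs = size gs /\ (forall c, c \in cs -> in_OK E c)
     /\ x = \sum_(i < size gs) cs`_i * gs`_i.

Definition frac_gens (E : {vspace M}) (gs : seq M) : Prop :=
  all (fun g => g \in E) gs /\ has (fun g => g != 0) gs.

Definition idl_eq (E : {vspace M}) (gs hs : seq M) : Prop :=
  forall x, idl E gs x <-> idl E hs x.

Fixpoint pow_gens (gs : seq M) (n : nat) : seq M :=
  if n is n'.+1 then [seq x * y | x <- gs, y <- pow_gens gs n'] else [:: 1].

Definition principal (E : {vspace M}) (gs : seq M) : Prop :=
  exists b : M, b \in E /\ b != 0 /\ idl_eq E gs [:: b].

End NF.

From HB Require Import structures.
From mathcomp Require Import all_boot all_order all_algebra all_fingroup all_field.
Import GRing.Theory Num.Theory.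
Local Open Scope ring_scope.
Set Implicit Arguments. Unset Strict Implicit. Unset Printing Implicit Defensive.

(* Let [a] be the ideal generated by [gs], so that [sigma a = alpha a] and
   [sigma (tau a) = beta (tau a)].  The products [gamma_j] of the conjugates
   [sigma^i alpha], [i < j], satisfy [sigma^j a = gamma_j a] and
   [N gamma_j = (N alpha)^j] for [N = N_{L/k}].  Because [r s = 1 mod p], the
   relation [tau^-1 sigma tau = sigma^r] gives [sigma tau = tau sigma^s'] with
   [s' = s mod p], hence [sigma (tau a) = tau(gamma_s') tau a]; cancelling the
   nonzero ideal [tau a], [beta / tau(gamma_s')] is a unit.  Likewise
   [sigma^p = 1] makes [gamma_p] a unit, and as [tau] normalises [<sigma>], [N]
   commutes with [tau]; taking norms yields
   [N beta = tau (N alpha)^s' * N(unit) = tau (N alpha)^s * N(unit)].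
   Cancellation of ideals rests on the determinant trick: an element stabilising
   a nonzero finitely generated module of algebraic integers is integral. *)


Section IntegralEigenvalue.

Variables (R : comNzRingType) (K : fieldType) (RtoK : {rmorphism R -> K}).
Local Notation intR := (integralOver RtoK).

Definition integral_coefs (q : {poly K}) := forall i, intR q`_i.

Lemma integral_coefsC c : intR c -> integral_coefs c%:P.
Proof. by move=> intc i; rewrite coefC; case: eqP => // _; apply: integral0. Qed.

Lemma integral_coefsX : integral_coefs 'X.
Proof. by move=> i; rewrite coefX; case: eqP => _; [apply: integral1 | apply: integral0]. Qed.

Lemma integral_coefsN q : integral_coefs q -> integral_coefs (- q).
Proof. by move=> intq i; rewrite coefN; apply: integral_opp. Qed.

Lemma integral_coefsD q1 q2 :
  integral_coefs q1 -> integral_coefs q2 -> integral_coefs (q1 + q2).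
Proof. by move=> int1 int2 i; rewrite coefD; apply: integral_add. Qed.

Lemma integral_coefsM q1 q2 :
  integral_coefs q1 -> integral_coefs q2 -> integral_coefs (q1 * q2).
Proof.
move=> int1 int2 i; rewrite coefM; apply: (big_ind intR) => //.
- exact: integral0.
- exact: integral_add.
by move=> j _; apply: integral_mul.
Qed.

Lemma char_poly_integral n (A : 'M[K]_n) :
  (forall i j, intR (A i j)) -> integral_coefs (char_poly A).
Proof.
move=> intA; have int1 := @integral_coefsC 1 (integral1 RtoK).
rewrite /char_poly /determinant.
apply: (big_ind integral_coefs) => [||s _]; last apply: integral_coefsM.
- by rewrite -polyC0; apply/integral_coefsC/integral0.
- exact: integral_coefsD.
- by case: (odd_perm s); rewrite ?expr1 ?expr0 //; apply: integral_coefsN.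
apply: (big_ind integral_coefs) => // [|i _]; first exact: integral_coefsM.
rewrite !mxE; apply/integral_coefsD/integral_coefsN/integral_coefsC/intA.
by case: (i == s i); [apply: integral_coefsX | apply/integral_coefsC/integral0].
Qed.

Lemma integral_eigenvalue n (A : 'M[K]_n) a :
  (forall i j, intR (A i j)) -> eigenvalue A a -> intR a.
Proof.
move=> intA; rewrite eigenvalue_root_char => rootAa.
apply: integral_root_monic (char_poly_monic A) rootAa _.
exact/integral_poly/char_poly_integral.
Qed.

(* [z] is an eigenvalue of the integral matrix of its action on the nonzero
   vector [hs]. *)
Lemma integral_stable_seq (hs : seq K) z :
  has (fun h => h != 0) hs ->
  (forall j : 'I_(size hs), exists2 c : 'I_(size hs) -> K,
     forall i, intR (c i) & z * hs`_j = \sum_i c i * hs`_i) ->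
  intR z.
Proof.
move=> hs_nz /fin_all_exists2[C intC defC].
pose A := \matrix_(i, j) C j i; pose v := \row_(i < size hs) hs`_i.
apply: (@integral_eigenvalue _ A) => [i j | ]; first by rewrite mxE.
apply/eigenvalueP; exists v.
  apply/rowP=> j; rewrite !mxE defC; apply: eq_bigr => i _.
  by rewrite !mxE mulrC.
case/hasP: hs_nz => h /(nthP 0)[i lti <-] hi_nz.
by apply: contraNneq hi_nz => /rowP/(_ (Ordinal lti)); rewrite !mxE => ->.
Qed.

End IntegralEigenvalue.

Section FractionalIdeals.

Variables (M : splittingFieldType rat) (L : {subfield M}).
Let ZM : {rmorphism int -> M} := intr.

Lemma alg_intE x : alg_int x <-> integralOver ZM x.
Proof. by split=> [[q [monq rootq]] | [q monq rootq]]; exists q. Qed.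

Lemma in_OK0 : in_OK L 0.
Proof. by split; [apply: rpred0 | apply/alg_intE/integral0]. Qed.

Lemma in_OK1 : in_OK L 1.
Proof. by split; [apply: rpred1 | apply/alg_intE/integral1]. Qed.

Lemma in_OKM a b : in_OK L a -> in_OK L b -> in_OK L (a * b).
Proof.
move=> [La /alg_intE intRa] [Lb /alg_intE intRb].
by split; [apply: rpredM | apply/alg_intE/integral_mul].
Qed.

Lemma in_OK_gal (f : gal_of L) a : in_OK L a -> in_OK L (f a).
Proof.
move=> [La [q [monq rootq]]]; split; first exact: memv_gal.
exists q; split=> //; move: (rmorph_root f rootq); rewrite -map_poly_comp.
by congr (root _ _); apply: eq_map_poly => z /=; rewrite rmorph_int.
Qed.

Fixpoint in_idl (gs : seq M) (x : M) : Prop :=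
  if gs is g :: gs' then exists c y, [/\ in_OK L c, in_idl gs' y & x = c * g + y]
  else x = 0.

Lemma idlE gs x : idl L gs x <-> in_idl gs x.
Proof.
elim: gs x => [|g gs IHgs] x /=.
  split=> [[cs [_ [_ ->]]] | ->]; first by rewrite big_ord0.
  by exists [::]; rewrite big_ord0.
split=> [[[|c cs] [//= [size_cs] [OKcs ->]]] |
          [c [y [OKc /IHgs [cs [size_cs [OKcs ->]]] ->]]]].
  rewrite big_ord_recl /=; exists c, (\sum_(i < size gs) cs`_i * gs`_i).
  split; [by apply: OKcs; rewrite mem_head | apply/IHgs | by []].
  by exists cs; split=> //; split=> // d csd; apply: OKcs; rewrite inE csd orbT.
exists (c :: cs); split; first by rewrite /= size_cs.
by split; [move=> d; rewrite inE => /orP[/eqP-> | /OKcs] | rewrite big_ord_recl].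
Qed.

Lemma in_idl0 gs : in_idl gs 0.
Proof.
by elim: gs => //= g gs IHgs; exists 0, 0; rewrite mul0r addr0; split=> //; apply: in_OK0.
Qed.

Lemma in_idl_gen gs g : g \in gs -> in_idl gs g.
Proof.
elim: gs => //= h gs IHgs; rewrite inE => /orP[/eqP-> | /IHgs idl_g].
  by exists 1, 0; rewrite mul1r addr0; split=> //; [apply: in_OK1 | apply: in_idl0].
by exists 0, g; rewrite mul0r add0r; split=> //; apply: in_OK0.
Qed.

Lemma in_idl_memv gs x : {subset gs <= L} -> in_idl gs x -> x \in L.
Proof.
elim: gs x => [|g gs IHgs] x gsL /=; first by move->; apply: rpred0.
move=> [c [y [[Lc _] idl_y ->]]]; rewrite rpredD // ?rpredM ?(gsL g) ?mem_head //.
by apply: (IHgs _ _ idl_y) => h gsh; rewrite gsL // inE gsh orbT.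
Qed.

Lemma in_idl_gal (f : gal_of L) gs x : in_idl gs x -> in_idl (map f gs) (f x).
Proof.
elim: gs x => [|g gs IHgs] x /=; first by move->; rewrite rmorph0.
move=> [c [y [OKc idl_y ->]]]; exists (f c), (f y).
by rewrite rmorphD rmorphM; split; [apply: in_OK_gal | apply: IHgs |].
Qed.

Lemma in_idl_scale a gs x : in_idl gs x -> in_idl (map ( *%R a) gs) (a * x).
Proof.
elim: gs x => [|g gs IHgs] x /=; first by move->; rewrite mulr0.
move=> [c [y [OKc idl_y ->]]]; exists c, (a * y).
by rewrite mulrDr mulrCA; split=> //; apply: IHgs.
Qed.

Lemma in_idl_unscale a gs x : a != 0 ->
  in_idl (map ( *%R a) gs) x -> in_idl gs (x / a).
Proof.
move=> a_nz; elim: gs x => [|g gs IHgs] x /=; first by move->; rewrite mul0r.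
move=> [c [y [OKc idl_y ->]]]; exists c, (y / a).
by rewrite mulrDl mulrCA [a * _]mulrC mulfK //; split=> //; apply: IHgs.
Qed.

Lemma idl_eq_refl hs : idl_eq L hs hs.
Proof. by []. Qed.

Lemma idl_eq_sym hs ks : idl_eq L hs ks -> idl_eq L ks hs.
Proof. by move=> eq_hk x; split=> /eq_hk. Qed.

Lemma idl_eq_trans hs ks ls : idl_eq L hs ks -> idl_eq L ks ls -> idl_eq L hs ls.
Proof. by move=> eq_hk eq_kl x; split=> [/eq_hk/eq_kl | /eq_kl/eq_hk]. Qed.

Lemma map_gal_subset (f : gal_of L) hs : {subset hs <= L} -> {subset map f hs <= L}.
Proof. by move=> hsL _ /mapP[x /hsL Lx ->]; apply: memv_gal. Qed.

Lemma map_mul_subset c hs : c \in L -> {subset hs <= L} -> {subset map ( *%R c) hs <= L}.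
Proof. by move=> Lc hsL _ /mapP[x /hsL Lx ->]; apply: rpredM. Qed.

Lemma idl_eq_gal (f : gal_of L) hs ks : {subset hs <= L} -> {subset ks <= L} ->
  idl_eq L hs ks -> idl_eq L (map f hs) (map f ks).
Proof.
suff idl_sub ls ls' : {subset ls <= L} -> idl_eq L ls ls' ->
    forall x, in_idl (map f ls) x -> in_idl (map f ls') x.
  move=> hsL ksL eq_hk x; split=> /idlE idl_x; apply/idlE.
    exact: idl_sub idl_x.
  by apply: idl_sub idl_x => //; apply: idl_eq_sym.
move=> lsL eq_ll' x idl_x; have Lx : x \in L.
  exact: in_idl_memv (map_gal_subset lsL) idl_x.
have idl_fVx : in_idl ls ((f^-1)%g x).
  suff <- : map (f^-1)%g (map f ls) = ls by apply: in_idl_gal.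
  rewrite -map_comp -[RHS]map_id; apply/eq_in_map => y /lsL Ly /=.
  by rewrite -galM // mulgV gal_id.
move/idlE: idl_fVx => /eq_ll'/idlE/(in_idl_gal f).
by rewrite -galM // mulVg gal_id.
Qed.

Lemma idl_eq_scale a hs ks : a != 0 -> idl_eq L hs ks ->
  idl_eq L (map ( *%R a) hs) (map ( *%R a) ks).
Proof.
move=> a_nz eq_hk x.
by split=> /idlE/(in_idl_unscale a_nz)/idlE/eq_hk/idlE/(in_idl_scale a);
  rewrite mulrC divfK // => /idlE.
Qed.

Lemma integral_idl_eq_quotient hs x y : has (fun h => h != 0) hs -> y != 0 ->
  idl_eq L (map ( *%R x) hs) (map ( *%R y) hs) -> integralOver ZM (x / y).
Proof.
move=> hs_nz y_nz eq_xy; apply: (integral_stable_seq hs_nz) => j.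
have /idlE/eq_xy/idlE/(in_idl_unscale y_nz)/idlE : in_idl (map ( *%R x) hs) (x * hs`_j).
  by apply/in_idl_gen/map_f/mem_nth.
move=> [cs [size_cs [OKcs def_xhj]]]; exists (fun i => cs`_i); last by rewrite mulrAC.
by move=> i; apply/alg_intE; apply: (OKcs _ (mem_nth 0 _)).2; rewrite size_cs.
Qed.

Lemma in_units_idl_eq hs x y : has (fun h => h != 0) hs ->
  x \in L -> y \in L -> x != 0 -> y != 0 ->
  idl_eq L (map ( *%R x) hs) (map ( *%R y) hs) -> in_units L (x / y).
Proof.
move=> hs_nz Lx Ly x_nz y_nz eq_xy; split; first by rewrite mulf_neq0 ?invr_eq0.
split; split; rewrite ?invf_div ?rpred_div //; apply/alg_intE.
  exact: integral_idl_eq_quotient hs_nz y_nz eq_xy.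
exact: integral_idl_eq_quotient hs_nz x_nz (idl_eq_sym eq_xy).
Qed.

Lemma in_units1 : in_units L 1.
Proof. by split; rewrite ?oner_neq0 ?invr1; split; apply: in_OK1. Qed.

Lemma in_unitsM a b : in_units L a -> in_units L b -> in_units L (a * b).
Proof.
move=> [a_nz [OKa OKa']] [b_nz [OKb OKb']]; split; first by rewrite mulf_neq0.
by rewrite invfM; split; apply: in_OKM.
Qed.

Lemma in_unitsV a : in_units L a -> in_units L a^-1.
Proof. by move=> [a_nz [OKa OKa']]; rewrite /in_units invr_eq0 invrK. Qed.

Lemma in_unitsX a n : in_units L a -> in_units L (a ^+ n).
Proof.
by move=> Ua; elim: n => [|n IHn]; [apply: in_units1 | rewrite exprS; apply: in_unitsM].
Qed.

Lemma in_units_exprz a (n : int) : in_units L a -> in_units L (a ^ n).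
Proof. by case: n => n Ua; [apply: in_unitsX | apply/in_unitsV/in_unitsX]. Qed.

Lemma in_units_gal (f : gal_of L) a : in_units L a -> in_units L (f a).
Proof.
move=> [a_nz [OKa OKa']]; split; first by rewrite fmorph_eq0.
by rewrite -fmorphV; split; apply: in_OK_gal.
Qed.

End FractionalIdeals.

Section GaloisNorms.

Variables (M : splittingFieldType rat) (L : {subfield M}).

Lemma gal_conjg_apply (g t : gal_of L) z : z \in L -> (g ^ t)%g (t z) = t (g z).
Proof. by move=> Lz; rewrite conjgE !galM ?memv_gal // -(galM _ _ Lz) mulgV gal_id. Qed.

Variable H : {group gal_of L}.
Local Notation N := (galNorm (fixedField H) L).

Lemma galNorm_fixedField_gal g x : g \in H -> x \in L -> N (g x) = N x.
Proof.
by move=> Hg Lx; apply: (@galNorm_gal _ _ (fixedField_aspace H)); rewrite ?gal_fixedField.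
Qed.

Lemma galNorm_fixedField_norm t x : t \in 'N(H)%g -> x \in L -> N (t x) = t (N x).
Proof.
move=> nHt Lx; rewrite /galNorm gal_fixedField rmorph_prod.
rewrite (reindex_acts 'J _ nHt); last by apply/subsetP => g; rewrite astabsJ.
by apply: eq_bigr => g _ /=; rewrite gal_conjg_apply.
Qed.

End GaloisNorms.

Section GaloisCocycle.

Variables (M : splittingFieldType rat) (L : {subfield M}) (sigma : gal_of L).
Variables (alpha : M) (gs : seq M).
Hypotheses (La : alpha \in L) (alpha_nz : alpha != 0) (gsL : {subset gs <= L}).
Hypothesis idl_alpha : idl_eq L (map sigma gs) (map ( *%R alpha) gs).

Definition gal_cocycle j := \prod_(i < j) (sigma ^+ i)%g alpha.

Lemma gal_cocycleS j : gal_cocycle j.+1 = alpha * sigma (gal_cocycle j).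
Proof.
rewrite /gal_cocycle big_ord_recl expg0 gal_id rmorph_prod; congr (_ * _).
by apply: eq_bigr => i _; rewrite expgSr galM.
Qed.

Lemma gal_cocycle_memv j : gal_cocycle j \in L.
Proof. by apply: rpred_prod => i _; apply: memv_gal. Qed.

Lemma gal_cocycle_neq0 j : gal_cocycle j != 0.
Proof. by rewrite prodf_seq_neq0; apply/allP => i _; rewrite fmorph_eq0. Qed.

Lemma galNorm_gal_cocycle j :
  galNorm (fixedField <[sigma]>%g) L (gal_cocycle j) =
  galNorm (fixedField <[sigma]>%g) L alpha ^+ j.
Proof.
rewrite (big_morph _ (galNormM _ _) (galNorm1 _ _)) -[j in _ ^+ j]card_ord -prodr_const.
by apply: eq_bigr => i _; rewrite galNorm_fixedField_gal ?mem_cycle.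
Qed.

Lemma idl_eq_gal_cocycle j :
  idl_eq L (map (sigma ^+ j)%g gs) (map ( *%R (gal_cocycle j)) gs).
Proof.
elim: j => [|j IHj].
  rewrite /gal_cocycle big_ord0 !map_id_in ?idl_eq_refl // => x _ /=.
    exact: mul1r.
  exact: gal_id.
have jgsL := map_gal_subset (f := (sigma ^+ j)%g) gsL.
have cgsL := map_mul_subset (gal_cocycle_memv j) gsL.
have -> : map (sigma ^+ j.+1)%g gs = map sigma (map (sigma ^+ j)%g gs).
  by rewrite -map_comp; apply/eq_in_map => x gsx; rewrite expgSr /= galM ?gsL.
apply: idl_eq_trans (idl_eq_gal sigma jgsL cgsL IHj) _.
have -> : map sigma (map ( *%R (gal_cocycle j)) gs) =
          map ( *%R (sigma (gal_cocycle j))) (map sigma gs).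
  by rewrite -!map_comp; apply/eq_map => x /=; rewrite rmorphM.
apply: idl_eq_trans (idl_eq_scale _ idl_alpha) _.
  by rewrite fmorph_eq0 gal_cocycle_neq0.
rewrite -map_comp gal_cocycleS (eq_map (_ : _ =1 *%R (alpha * sigma (gal_cocycle j)))) //.
by move=> x /=; rewrite mulrCA mulrA.
Qed.

Lemma in_units_gal_cocycle n : has (fun g => g != 0) gs -> (sigma ^+ n = 1)%g ->
  in_units L (gal_cocycle n).
Proof.
move=> gs_nz sigma_n; suff /in_unitsV : in_units L (1 / gal_cocycle n).
  by rewrite div1r invrK.
apply: (in_units_idl_eq gs_nz (rpred1 _) (gal_cocycle_memv n) (oner_neq0 _)).
  exact: gal_cocycle_neq0.
have := idl_eq_gal_cocycle n; rewrite sigma_n map_id_in => [|x _]; last exact: gal_id.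
by rewrite [map ( *%R 1) gs]map_id_in // => x _; apply: mul1r.
Qed.

Lemma idl_eq_gal_cocycle_conj (tau : gal_of L) e :
    {in L, forall z, sigma (tau z) = tau ((sigma ^+ e)%g z)} ->
  idl_eq L (map sigma (map tau gs)) (map ( *%R (tau (gal_cocycle e))) (map tau gs)).
Proof.
move=> sigma_tau; have gsL_e := map_gal_subset (f := (sigma ^+ e)%g) gsL.
have := idl_eq_gal tau gsL_e (map_mul_subset (gal_cocycle_memv e) gsL) (idl_eq_gal_cocycle e).
have -> : map tau (map (sigma ^+ e)%g gs) = map sigma (map tau gs).
  by rewrite -!map_comp; apply/eq_in_map => x /gsL Lx; rewrite /= sigma_tau.
have -> // : map tau (map ( *%R (gal_cocycle e)) gs) =
             map ( *%R (tau (gal_cocycle e))) (map tau gs).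
by rewrite -!map_comp; apply/eq_map => x; rewrite /= rmorphM.
Qed.

End GaloisCocycle.

Lemma modn_mul_absz_modz (p : nat) (r s : int) : (1 < p)%N ->
  r * s - 1 \in dvdz p -> ((absz (r %% p)%Z * absz (s %% p)%Z) %% p = 1)%N.
Proof.
move=> p_gt1 p_dvd; have p_nz : (p : int) != 0 by rewrite eqz_nat -lt0n ltnW.
apply/eqP; rewrite -eqz_nat -modz_nat PoszM !gez0_abs ?modz_ge0 // modzMm.
by move: p_dvd; rewrite -eqz_mod_dvd => /eqP->; rewrite modz_small.
Qed.

Lemma conjg_expg_modinv (gT : finGroupType) (x y : gT) (p e e' : nat) :
  (x ^+ p = 1)%g -> (x ^ y = x ^+ e)%g -> ((e * e') %% p = 1)%N ->
  ((x ^+ e') ^ y = x)%g.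
Proof. by move=> xp xy ee'; rewrite conjXg xy -expgM -(expg_mod _ xp) ee' expg1. Qed.

Lemma exprz_modz (R : unitRingType) (b : R) (s : int) (p : nat) :
  b \is a GRing.unit -> (0 < p)%N ->
  b ^+ absz (s %% p)%Z = b ^ s * (b ^+ p) ^ (- (s %/ p)%Z).
Proof.
move=> Ub p_gt0; have p_nz : (p : int) != 0 by rewrite eqz_nat -lt0n.
rewrite -[b ^+ p]/(b ^ (p : int)) exprz_exp -exprzDr // {2}(divz_eq s p).
rewrite -[b ^+ _]/(b ^ (Posz _)) gez0_abs ?modz_ge0 //.
by rewrite mulrN (mulrC (p : int)) addrAC subrr add0r.
Qed.

Lemma galNormXz (M : splittingFieldType rat) (U V : {vspace M}) x (n : int) :
  galNorm U V (x ^ n) = galNorm U V x ^ n.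
Proof. by case: n => n; rewrite ?galNormV galNormX. Qed.

Unset Implicit Arguments. Set Strict Implicit.

Theorem mainTheorem8
  (m p : nat) (r s : int)
  (Hm : (1 < m)%N) (Hp : prime p) (Hpodd : odd p) (HpM : (p = 1 %[mod m])%N)
  (Hord : forall j : nat, (0 < j)%N ->
            ((r ^+ j - 1 \in dvdz p) = (m %| j)%N))
  (Hrs : (r * s - 1 \in dvdz p))
  (M : splittingFieldType rat) (F L : {subfield M})
  (HFL : galois F L)
  (sigma tau : gal_of L)
  (Hgen : ('Gal(L / F))%g = <<[set sigma; tau]>>%g)
  (Hord_G : #|('Gal(L / F))%g| = (p * m)%N)
  (Hsp : (sigma ^+ p = 1)%g) (Htm : (tau ^+ m = 1)%g)
  (Hrel : (sigma ^ tau = sigma ^+ absz (r %% (p : int))%Z)%g) :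
  let k : {vspace M} := fixedField <[sigma]>%g in
  forall gs : seq M, frac_gens L gs ->
  (exists n : nat, principal L (pow_gens gs (p ^ n))) ->
  forall alpha beta : M, alpha \in L -> alpha != 0 -> beta \in L -> beta != 0 ->
  idl_eq L (map sigma gs) (map (fun x => alpha * x) gs) ->
  idl_eq L (map sigma (map tau gs)) (map (fun x => beta * x) (map tau gs)) ->
  exists u : M, in_units L u /\
    galNorm k L beta = tau ((galNorm k L alpha) ^ s) * galNorm k L u.
Proof.
move=> k gs [/allP gsL gs_nz] _ alpha beta La alpha_nz Lb beta_nz idl_alpha idl_beta.
have p_gt1 := prime_gt1 Hp; set s' := absz (s %% p)%Z.
set gamma := gal_cocycle sigma alpha.
have sigma_tau : {in L, forall z, sigma (tau z) = tau ((sigma ^+ s')%g z)}.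
  move=> z Lz; rewrite -[RHS]gal_conjg_apply //.
  by rewrite (conjg_expg_modinv Hsp Hrel) ?modn_mul_absz_modz.
have Uv : in_units L (beta / tau (gamma s')).
  have idl_tau := idl_eq_gal_cocycle_conj La alpha_nz gsL idl_alpha sigma_tau.
  apply: (in_units_idl_eq _ Lb _ beta_nz _ (idl_eq_trans (idl_eq_sym idl_beta) idl_tau)).
  - by rewrite has_map; apply: sub_has gs_nz => x; rewrite /= fmorph_eq0.
  - exact/memv_gal/gal_cocycle_memv.
  by rewrite fmorph_eq0 gal_cocycle_neq0.
have Ugamma_p : in_units L (gamma p) :=
  in_units_gal_cocycle La alpha_nz gsL idl_alpha gs_nz Hsp.
have nsigma_tau : tau \in 'N(<[sigma]>)%g.
  by apply/normP/eqP; rewrite eqEcard cardJg leqnn andbT -cycleJ Hrel cycleX.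
have N_tau_gamma j : galNorm k L (tau (gamma j)) = tau (galNorm k L alpha) ^+ j.
  by rewrite galNorm_fixedField_norm ?gal_cocycle_memv // galNorm_gal_cocycle // rmorphXn.
have Nalpha_nz : tau (galNorm k L alpha) != 0 by rewrite fmorph_eq0 galNorm_eq0.
exists (beta / tau (gamma s') * tau (gamma p) ^ (- (s %/ p)%Z)); split.
  exact/in_unitsM/in_units_exprz/in_units_gal.
rewrite fmorphXz !galNormM galNormXz galNormV !N_tau_gamma mulrCA.
by rewrite -exprz_modz ?unitfE ?prime_gt0 // divfK // expf_neq0.
Qed.
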